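(* Let $T_2\in\mathbb{R}^{M^2\times M^2}$ be the symmetric positive definite 2-level Toeplitz matrix $T_2=I\otimes T_1+T_1\otimes I$ described in the context, and let $D_2\in\mathbb{R}^{M^2\times M^2}$ be a diagonal matrix with nonnegative diagonal entries, whose maximal diagonal entry is $\lambda_{\max}$. Let $$\mathcal{R}_2=\begin{bmatrix} I & T_2-D_2\\ D_2-T_2 & I\end{bmatrix},\quad \mathcal{T}_2=\begin{bmatrix} 0 & T_2\\ -T_2 & 0\end{bmatrix},\quad \mathcal{D}_2=\begin{bmatrix} I & -D_2\\ D_2 & I\end{bmatrix},$$ let $\omega>0$, and let $\mathcal{F}_{2,\omega}=\frac{1}{2\omega}(\omega I+\mathcal{T}_2)(\omega I+\mathcal{D}_2)$. Then all eigenvalues of $\mathcal{F}_{2,\omega}^{-1}\mathcal{R}_2$ lie in the disk centered at $1$ with radius $$\sigma(\omega)=\sqrt{\frac{(\omega-1)^2+\lambda_{\max}^2}{(\omega+1)^2+\lambda_{\max}^2}}<1.$$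
   Context: Let $1<\alpha\le2$, $M$ a positive integer, $\mathrm{a}<\mathrm{b}$, $h=(\mathrm{b}-\mathrm{a})/(M+1)$, $\Delta t>0$, $\mu=\Delta t/h^{\alpha}$. For $k\in\mathbb{Z}$ let $c_k=\frac{(-1)^k\Gamma(\alpha+1)}{\Gamma(\alpha/2-k+1)\Gamma(\alpha/2+k+1)}$. Let $T_1=\mu T_0\in\mathbb{R}^{M\times M}$ where $T_0$ is the symmetric Toeplitz matrix with entries $[T_0]_{i,j}=c_{i-j}$. $I$ denotes identity matrices of appropriate size, $\otimes$ the Kronecker product. *)

From HB Require Import structures.
From mathcomp Require Import all_boot all_order all_algebra.
From mathcomp Require Import all_classical all_reals.
From mathcomp Require Import topology normedtype sequences exp.
From mathcomp Require Import complex mxtens.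
Set Implicit Arguments. Unset Strict Implicit. Unset Printing Implicit Defensive.
Import Order.TTheory GRing.Theory Num.Theory.
Import numFieldNormedType.Exports.
Local Open Scope ring_scope.

Section FracDefs.
Variable R : realType.

(* Reciprocal Gamma function 1/Gamma(x), via Gauss' limit formula
   1/Gamma(x) = lim_n x(x+1)...(x+n) / (n! n^x), valid for every real x
   (it is 0 exactly at the poles x = 0,-1,-2,... of Gamma). *)
Definition rGamma (x : R) : R :=
  limn (fun n : nat =>
          (\prod_(i < n.+1) (x + i%:R)) / (n`!%:R * powR n%:R x)).

Definition frac_coef (alpha : R) (k : int) : R :=
  (-1) ^+ `|k|%N * (rGamma (alpha + 1))^-1
  * rGamma (alpha / 2 - k%:~R + 1) * rGamma (alpha / 2 + k%:~R + 1).

Definition meshh (M : nat) (a b : R) : R := (b - a) / (M.+1)%:R.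
Definition mu_ratio (alpha : R) (M : nat) (a b dt : R) : R :=
  dt / powR (meshh M a b) alpha.

Definition T0 (alpha : R) (M : nat) : 'M[R]_M :=
  \matrix_(i < M, j < M) frac_coef alpha (i%:Z - j%:Z).

Definition T1 (alpha : R) (M : nat) (a b dt : R) : 'M[R]_M :=
  mu_ratio alpha M a b dt *: T0 alpha M.

Definition T2 (alpha : R) (M : nat) (a b dt : R) : 'M[R]_(M * M) :=
  (1%:M : 'M[R]_M) *t T1 alpha M a b dt + T1 alpha M a b dt *t (1%:M : 'M[R]_M).

Definition calR2 (n : nat) (T D : 'M[R]_n) : 'M[R]_(n + n) :=
  block_mx 1%:M (T - D) (D - T) 1%:M.
Definition calT2 (n : nat) (T : 'M[R]_n) : 'M[R]_(n + n) :=
  block_mx 0 T (- T) 0.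
Definition calD2 (n : nat) (D : 'M[R]_n) : 'M[R]_(n + n) :=
  block_mx 1%:M (- D) D 1%:M.
Definition calF2 (n : nat) (T D : 'M[R]_n) (omega : R) : 'M[R]_(n + n) :=
  (2 * omega)^-1 *: ((omega%:M + calT2 T) *m (omega%:M + calD2 D)).

Definition sigma_bound (omega lmax : R) : R :=
  Num.sqrt (((omega - 1) ^+ 2 + lmax ^+ 2) / ((omega + 1) ^+ 2 + lmax ^+ 2)).

Definition cplx_mx (m n : nat) (A : 'M[R]_(m, n)) : 'M[R[i]]_(m, n) :=
  map_mx (fun x : R => (x%:C)%C) A.

End FracDefs.

From HB Require Import structures.
From mathcomp Require Import all_boot all_order all_algebra.
From mathcomp Require Import all_classical all_reals.
From mathcomp Require Import topology normedtype sequences exp.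
From mathcomp Require Import complex mxtens.
From mathcomp Require Import ring lra.
Import Order.TTheory GRing.Theory Num.Theory.
Import numFieldNormedType.Exports.
Set Implicit Arguments. Unset Strict Implicit. Unset Printing Implicit Defensive.
Local Open Scope ring_scope.

(* Put P = w + T_2, P' = w - T_2, Q = w + D_2, Q' = w - D_2 for the block
   matrices T_2, D_2 of the statement.  Then 2w F = PQ and 2w R = PQ - P'Q',
   so a left eigenvector v of F^-1 R for z gives x = v (PQ)^-1 with
   x P' Q' = (1 - z) x P Q.  As T_2 is skew-symmetric, P and P' have the same
   Gram matrix w^2 + T_2 T_2^T, so |y P'| = |y P| for every row y.  As
   D_2 = 1 + S with S skew-symmetric and S S^T = diag(D_2^2, D_2^2), the Gram
   matrices of Q and Q' are (w + 1)^2 + S S^T and (w - 1)^2 + S S^T, whence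
   |y Q'|^2 <= sigma^2 |y Q|^2.  Since Q and Q' commute, applying this to
   y = x P' Q^-1 gives |1 - z| |x P| <= sigma |x P|. *)

Section ShiftedProducts.
Variables (R : comPzRingType) (n : nat).
Implicit Types (w : R) (X Y : 'M[R]_n).

Lemma mulmx_shift_sub w X Y :
  (w%:M + X) *m (w%:M + Y) - (w%:M - X) *m (w%:M - Y) = (2 * w) *: (X + Y).
Proof.
rewrite !(mulmxDl, mulmxDr, mulNmx, mulmxN, mul_scalar_mx, mul_mx_scalar).
move: (X *m Y) (w%:M : 'M[R]_n) => Z W.
by apply/matrixP => i j; rewrite !mxE; ring.
Qed.

Lemma mulmx_shiftC w Y : (w%:M + Y) *m (w%:M - Y) = (w%:M - Y) *m (w%:M + Y).
Proof.
rewrite !(mulmxDl, mulmxDr, mulNmx, mulmxN, mul_scalar_mx, mul_mx_scalar).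
move: (Y *m Y) (w%:M : 'M[R]_n) => Z W.
by apply/matrixP => i j; rewrite !mxE; ring.
Qed.

End ShiftedProducts.

Section HermitianForm.
Variables (R : realType) (n : nat).
Implicit Types (u : 'rV[R[i]]_n) (A G : 'M[R]_n).

Definition hnorm2 u : R[i] := (u *m (map_mx conjc u)^T) 0 0.
Definition hform u G : R[i] := (u *m cplx_mx G *m (map_mx conjc u)^T) 0 0.

Lemma hnorm20 : hnorm2 0 = 0.
Proof. by rewrite /hnorm2 mul0mx mxE. Qed.

Lemma hnorm2E u : hnorm2 u = \sum_j u 0 j * (u 0 j)^*%C.
Proof. by rewrite /hnorm2 mxE; apply: eq_bigr => j _; rewrite !mxE. Qed.

Lemma hnorm2_ge0 u : 0 <= hnorm2 u.
Proof. by rewrite hnorm2E; apply: sumr_ge0 => j _; apply: mulcJ_ge0. Qed.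

Lemma hnorm2_eq0 u : (hnorm2 u == 0) = (u == 0).
Proof.
apply/eqP/eqP => [|->]; last exact: hnorm20.
rewrite hnorm2E => /psumr_eq0P u0; apply/matrixP => i j; rewrite (ord1 i) mxE.
have /eqP := u0 (fun k _ => mulcJ_ge0 _) j isT.
by rewrite -sqr_normc sqrf_eq0 normr_eq0 => /eqP.
Qed.

Lemma hnorm2_gt0 u : u != 0 -> 0 < hnorm2 u.
Proof. by rewrite lt_def hnorm2_ge0 hnorm2_eq0 andbT. Qed.

Lemma hnorm2Z (y : R[i]) u : hnorm2 (y *: u) = `|y| ^+ 2 * hnorm2 u.
Proof.
rewrite sqr_normc !hnorm2E mulr_sumr; apply: eq_bigr => j _.
by rewrite !mxE rmorphM /= mulrACA.
Qed.

Lemma conj_cplx_mx m p (B : 'M[R]_(m, p)) : map_mx conjc (cplx_mx B) = cplx_mx B.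
Proof. by apply/matrixP => i j; rewrite !mxE conjc_real. Qed.

Lemma hnorm2_mul_cplx u A : hnorm2 (u *m cplx_mx A) = hform u (A *m A^T).
Proof.
rewrite /hnorm2 /hform map_mxM conj_cplx_mx trmx_mul /cplx_mx map_mxM -map_trmx.
by rewrite !mulmxA.
Qed.

Lemma hformD u G1 G2 : hform u (G1 + G2) = hform u G1 + hform u G2.
Proof. by rewrite /hform /cplx_mx map_mxD mulmxDr mulmxDl mxE. Qed.

Lemma hformZ u (a : R) G : hform u (a *: G) = a%:C%C * hform u G.
Proof. by rewrite /hform /cplx_mx map_mxZ -scalemxAr -scalemxAl mxE. Qed.

Lemma hform1 u : hform u 1%:M = hnorm2 u.
Proof. by rewrite /hform /cplx_mx map_mx1 mulmx1. Qed.

Lemma hform_diag_ge0 u (d : 'rV[R]_n) :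
  (forall j, 0 <= d 0 j) -> 0 <= hform u (diag_mx d).
Proof.
move=> d_ge0; rewrite /hform /cplx_mx map_diag_mx mul_mx_diag mxE.
apply: sumr_ge0 => j _; rewrite !mxE mulrAC.
by apply: mulr_ge0; [apply: mulcJ_ge0 | rewrite ler0c].
Qed.

Lemma hnorm2_mul_cplx_le u A B (q : R) (g : 'rV[R]_n) :
  (forall j, 0 <= g 0 j) -> q *: (A *m A^T) = B *m B^T + diag_mx g ->
  hnorm2 (u *m cplx_mx B) <= q%:C%C * hnorm2 (u *m cplx_mx A).
Proof.
move=> g_ge0 gramAB; rewrite !hnorm2_mul_cplx -hformZ gramAB hformD.
by rewrite lerDl hform_diag_ge0.
Qed.

End HermitianForm.

Lemma ler_shift_ratio (F : realFieldType) (c c' l x : F) :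
  c != 0 -> c' ^+ 2 <= c ^+ 2 -> 0 <= x <= l ^+ 2 ->
  c' ^+ 2 + x <= (c' ^+ 2 + l ^+ 2) / (c ^+ 2 + l ^+ 2) * (c ^+ 2 + x).
Proof.
move=> c_neq0 c'c /andP[x_ge0 xl].
have cl_gt0 : 0 < c ^+ 2 + l ^+ 2 by rewrite ltr_wpDr ?sqr_ge0 // exprn_even_gt0.
rewrite mulrAC ler_pdivlMr //; nra.
Qed.

Section SkewShift.
Variables (R : realType) (n : nat) (X : 'M[R]_n).
Hypothesis skewX : X^T = - X.
Implicit Types (c : R) (u : 'rV[R[i]]_n).

Lemma gram_shift_skew c : (c%:M + X) *m (c%:M + X)^T = c ^+ 2 *: 1%:M + X *m X^T.
Proof.
rewrite linearD /= tr_scalar_mx skewX !(mulmxDl, mulmxDr, mulmxN, mul_scalar_mx, mul_mx_scalar).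
rewrite -[c%:M]scalemx1 scalerA -expr2.
move: (X *m X) (1%:M : 'M[R]_n) => Z W.
by apply/matrixP => i j; rewrite !mxE; ring.
Qed.

Lemma gram_shiftN_skew c : (c%:M - X) *m (c%:M - X)^T = c ^+ 2 *: 1%:M + X *m X^T.
Proof.
rewrite linearB /= tr_scalar_mx skewX opprK.
rewrite !(mulmxDl, mulmxDr, mulmxN, mulNmx, mul_scalar_mx, mul_mx_scalar).
rewrite -[c%:M]scalemx1 scalerA -expr2.
move: (X *m X) (1%:M : 'M[R]_n) => Z W.
by apply/matrixP => i j; rewrite !mxE; ring.
Qed.

Lemma hnorm2_shift_skew c u :
  hnorm2 (u *m cplx_mx (c%:M + X)) = (c ^+ 2)%:C%C * hnorm2 u + hnorm2 (u *m cplx_mx X).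
Proof. by rewrite !hnorm2_mul_cplx gram_shift_skew hformD hformZ hform1. Qed.

Lemma hnorm2_shiftN_skew c u :
  hnorm2 (u *m cplx_mx (c%:M - X)) = hnorm2 (u *m cplx_mx (c%:M + X)).
Proof. by rewrite !hnorm2_mul_cplx gram_shift_skew gram_shiftN_skew. Qed.

Lemma unitmx_shift_skew c : c != 0 -> cplx_mx (c%:M + X) \in unitmx.
Proof.
move=> c_neq0; rewrite -row_free_unit; apply: inj_row_free => u uX0; apply/eqP.
have /eqP := hnorm2_shift_skew c u; rewrite uX0 -hnorm2_eq0 eq_sym hnorm20.
rewrite paddr_eq0 ?mulr_ge0 ?hnorm2_ge0 ?ler0c ?sqr_ge0 //.
by rewrite mulf_eq0 fmorph_eq0 sqrf_eq0 (negPf c_neq0) => /andP[].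
Qed.

Lemma hnorm2_shift_skew_contract (f : 'rV[R]_n) (c c' l : R) u :
  X *m X^T = diag_mx f -> (forall j, 0 <= f 0 j <= l ^+ 2) ->
  c != 0 -> c' ^+ 2 <= c ^+ 2 ->
  hnorm2 (u *m cplx_mx (c'%:M - X))
    <= ((c' ^+ 2 + l ^+ 2) / (c ^+ 2 + l ^+ 2))%:C%C * hnorm2 (u *m cplx_mx (c%:M + X)).
Proof.
move=> gramX f_bound c_neq0 c'c; set q := _ / _.
pose g := \row_j (q * (c ^+ 2 + f 0 j) - (c' ^+ 2 + f 0 j)).
apply: (@hnorm2_mul_cplx_le _ _ _ _ _ _ g) => [j|].
  by rewrite mxE subr_ge0 ler_shift_ratio.
rewrite gram_shift_skew gram_shiftN_skew gramX.
apply/matrixP => i j; rewrite !mxE; case: (i == j); rewrite ?mulr1n ?mulr0n; ring.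
Qed.

End SkewShift.

Lemma eigenvalue_splitting_bound (R : realType) n (P P' Q Q' : 'M[R[i]]_n) r z :
  P \in unitmx -> Q \in unitmx -> Q *m Q' = Q' *m Q ->
  (forall u, hnorm2 (u *m P') = hnorm2 (u *m P)) ->
  (forall u, hnorm2 (u *m Q') <= r * hnorm2 (u *m Q)) ->
  eigenvalue (invmx (P *m Q) *m (P *m Q - P' *m Q')) z -> `|1 - z| ^+ 2 <= r.
Proof.
move=> P_unit Q_unit QQ'C P_iso Q_contr /eigenvalueP[v vE v_neq0].
have PQ_unit : P *m Q \in unitmx by rewrite unitmx_mul P_unit.
set w := v *m invmx (P *m Q).
have wPQ : w *m (P *m Q) = v by rewrite mulmxKV.
have wP'Q' : w *m (P' *m Q') = (1 - z) *: (w *m (P *m Q)).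
  have wE : w *m (P *m Q - P' *m Q') = z *: (w *m (P *m Q)) by rewrite -mulmxA vE wPQ.
  by rewrite scalerBl scale1r -wE mulmxBr opprB addrC subrK.
set u := w *m P' *m invmx Q.
have uQ' : u *m Q' = (1 - z) *: (w *m P).
  have : u *m Q' *m Q = (1 - z) *: (w *m P) *m Q.
    by rewrite -mulmxA -QQ'C mulmxA /u mulmxKV // -mulmxA wP'Q' -scalemxAl mulmxA.
  by move/(congr1 (mulmx^~ (invmx Q))); rewrite !mulmxK.
have wP_neq0 : w *m P != 0.
  by apply: contraNneq v_neq0 => wP0; rewrite -wPQ mulmxA wP0 mul0mx.
have := Q_contr u; rewrite uQ' hnorm2Z /u mulmxKV // P_iso.
by rewrite ler_pM2r // hnorm2_gt0.
Qed.

Section BlockMatrices.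
Variables (R : realType) (n : nat).
Implicit Types (T D : 'M[R]_n) (d : 'rV[R]_n).

Definition skew_block D : 'M[R]_(n + n) := block_mx 0 (- D) D 0.

Lemma calT2E T : calT2 T = skew_block (- T).
Proof. by rewrite /calT2 /skew_block opprK. Qed.

Lemma calD2E D : calD2 D = 1%:M + skew_block D.
Proof. by rewrite /calD2 /skew_block (scalar_mx_block n n) add_block_mx !addr0 !add0r. Qed.

Lemma calR2E T D : calR2 T D = calT2 T + calD2 D.
Proof. by rewrite /calR2 /calT2 /calD2 add_block_mx !add0r addrC [- T + D]addrC. Qed.

Lemma tr_skew_block D : D^T = D -> (skew_block D)^T = - skew_block D.
Proof.
move=> symD; rewrite /skew_block tr_block_mx !trmx0 linearN /= symD.
by rewrite opp_block_mx !oppr0 opprK.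
Qed.

Lemma gram_skew_block_diag d :
  skew_block (diag_mx d) *m (skew_block (diag_mx d))^T
    = diag_mx (row_mx (\row_j d 0 j ^+ 2) (\row_j d 0 j ^+ 2)).
Proof.
rewrite tr_skew_block ?tr_diag_mx // mulmxN /skew_block mulmx_block.
rewrite !mul0mx !mulmx0 mulNmx mulmxN !add0r !addr0 mulmx_diag diag_mx_row.
by rewrite opp_block_mx oppr0 opprK; congr (block_mx (diag_mx _) 0 0 (diag_mx _));
  apply/rowP => j; rewrite !mxE expr2.
Qed.

Lemma tr_calT2 T : T^T = T -> (calT2 T)^T = - calT2 T.
Proof. by move=> symT; rewrite calT2E tr_skew_block // linearN /= symT. Qed.

Lemma shift_calD2E (w : R) D : w%:M + calD2 D = (w + 1)%:M + skew_block D.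
Proof. by rewrite calD2E addrA raddfD. Qed.

Lemma shiftN_calD2E (w : R) D : w%:M - calD2 D = (w - 1)%:M - skew_block D.
Proof. by rewrite calD2E opprD addrA raddfB. Qed.

Lemma unitmx_shift_calD2 (w : R) D :
  D^T = D -> w + 1 != 0 -> cplx_mx (w%:M + calD2 D) \in unitmx.
Proof. by move=> symD w1; rewrite shift_calD2E unitmx_shift_skew // tr_skew_block. Qed.

Lemma hnorm2_calD2_contract (w l : R) d u :
  0 <= w -> (forall j, 0 <= d 0 j <= l) ->
  hnorm2 (u *m cplx_mx (w%:M - calD2 (diag_mx d)))
    <= (((w - 1) ^+ 2 + l ^+ 2) / ((w + 1) ^+ 2 + l ^+ 2))%:C%C
       * hnorm2 (u *m cplx_mx (w%:M + calD2 (diag_mx d))).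
Proof.
move=> w_ge0 d_bound; rewrite shift_calD2E shiftN_calD2E.
apply: hnorm2_shift_skew_contract; first by rewrite tr_skew_block ?tr_diag_mx.
- exact: gram_skew_block_diag.
- move=> j; rewrite mxE; case: split_ordP => k _; rewrite mxE;
  by have /andP[dk_ge0 dk_le] := d_bound k; rewrite sqr_ge0 ler_pXn2r ?nnegrE ?(le_trans dk_ge0).
- by rewrite gt_eqF // ltr_wpDl.
- nra.
Qed.

End BlockMatrices.

Lemma calF2_inv_calR2 (R : realType) n (T D : 'M[R]_n) (w : R) :
  w != 0 -> (w%:M + calT2 T) *m (w%:M + calD2 D) \in unitmx ->
  invmx (calF2 T D w) *m calR2 T D
    = invmx ((w%:M + calT2 T) *m (w%:M + calD2 D))
      *m ((w%:M + calT2 T) *m (w%:M + calD2 D) - (w%:M - calT2 T) *m (w%:M - calD2 D)).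
Proof.
move=> w_neq0 PQ_unit; have w2_neq0 : 2 * w != 0 by rewrite mulf_neq0 ?pnatr_eq0.
rewrite mulmx_shift_sub -calR2E /calF2 invmxZ ?unitmxZ ?unitfE ?invr_eq0 //.
by rewrite invrK -scalemxAl -scalemxAr.
Qed.

Lemma sqr_sigma_bound (R : realType) (w l : R) :
  sigma_bound w l ^+ 2 = ((w - 1) ^+ 2 + l ^+ 2) / ((w + 1) ^+ 2 + l ^+ 2).
Proof. by rewrite sqr_sqrtr // divr_ge0 // addr_ge0 ?sqr_ge0. Qed.

Lemma sigma_bound_lt1 (R : realType) (w l : R) : 0 < w -> sigma_bound w l < 1.
Proof.
move=> w_gt0; have den_gt0 : 0 < (w + 1) ^+ 2 + l ^+ 2 by nra.
by rewrite /sigma_bound -[X in _ < X]sqrtr1 ltr_sqrt // ltr_pdivrMr // mul1r ltrD2r; nra.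
Qed.

Lemma frac_coefN (R : realType) (alpha : R) (k : int) :
  frac_coef alpha (- k) = frac_coef alpha k.
Proof.
rewrite /frac_coef abszN mulrNz opprK -!mulrA.
by congr (_ * (_ * _)); rewrite mulrC.
Qed.

Lemma tr_T2 (R : realType) (alpha : R) M (a b dt : R) :
  (T2 alpha M a b dt)^T = T2 alpha M a b dt.
Proof.
have trT0 : (T0 alpha M)^T = T0 alpha M.
  by apply/matrixP => i j; rewrite !mxE -opprB frac_coefN.
have trT1 : (T1 alpha M a b dt)^T = T1 alpha M a b dt by rewrite linearZ /= trT0.
by rewrite /T2 linearD /= !trmx_tens trmx1 trT1.
Qed.

Theorem theorem2 (R : realType) (alpha : R) (M : nat) (a b dt : R)
  (D2 : 'M[R]_(M * M)) (omega : R) :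
  1 < alpha -> alpha <= 2 -> (0 < M)%N -> a < b -> 0 < dt ->
  is_diag_mx D2 -> (forall i, 0 <= D2 i i) ->
  0 < omega ->
  let lmax := \big[Num.max/0]_(i < M * M) D2 i i in
  let Tm := T2 alpha M a b dt in
  let F := calF2 Tm D2 omega in
  let sigma := sigma_bound omega lmax in
  (forall z : R[i],
     eigenvalue (cplx_mx (invmx F *m calR2 Tm D2)) z ->
     `|z - 1| <= (sigma%:C)%C)
  /\ sigma < 1.
Proof.
move=> _ _ _ _ _ /diag_mxP[d ->] D2_ge0 w_gt0 lmax Tm F sigma.
split=> [z|]; last exact: sigma_bound_lt1.
have d_bound j : 0 <= d 0 j <= lmax.
  have dE : diag_mx d j j = d 0 j by rewrite mxE eqxx.
  by rewrite -dE D2_ge0 /lmax (le_bigmax _ (fun i => diag_mx d i i)).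
have skew_T : (calT2 Tm)^T = - calT2 Tm by rewrite tr_calT2 // tr_T2.
have P_unit := unitmx_shift_skew skew_T (lt0r_neq0 w_gt0).
have Q_unit : cplx_mx (omega%:M + calD2 (diag_mx d)) \in unitmx.
  by rewrite unitmx_shift_calD2 ?tr_diag_mx // lt0r_neq0 // ltr_wpDl // ltW.
have PQ_unit : (omega%:M + calT2 Tm) *m (omega%:M + calD2 (diag_mx d)) \in unitmx.
  by rewrite -(map_unitmx (real_complex R)) map_mxM unitmx_mul P_unit Q_unit.
rewrite /F calF2_inv_calR2 ?lt0r_neq0 // /cplx_mx map_mxM map_invmx map_mxB !map_mxM.
move=> eig; have : `|1 - z| ^+ 2 <= (sigma ^+ 2)%:C%C.
  rewrite sqr_sigma_bound.
  apply: (eigenvalue_splitting_bound P_unit Q_unit _ _ _ eig) => [||u].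
  - by rewrite /cplx_mx -!map_mxM mulmx_shiftC.
  - exact: hnorm2_shiftN_skew.
  - exact: hnorm2_calD2_contract (ltW w_gt0) d_bound.
by rewrite distrC rmorphXn ler_pXn2r // ?nnegrE ?ler0c ?sqrtr_ge0.
Qed.
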